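(* Let $(J,S)$ be a homogeneous $d$-dimensional multi-time Markov renewal chain with semi-Markov kernel $q$, let $u=\sum_{n\ge0}q^{(n)}=(\mathbbm{I}_s-q)^{(-1)}$, and let $Z$ be the associated multi-time semi-Markov chain with transition function $P$. Then $P=u*\widetilde{H}$.
   Context: $E=\{1,\dots,s\}$; $\mathcal{M}_s(\mathbb{N}^d)$ is the set of functions $\mathbb{N}^d\to\mathbb{R}^{s\times s}$, with convolution $[A*B](k)=\sum_{l+l'=k}A(l)B(l')$, identity $\mathbbm{I}_s$, powers $A^{(n)}$ and convolutional inverse $A^{(-1)}$. $\mathbb{N}^d$ carries the partial order $k\le l$ iff $k_u\le l_u$ for all $u$ ($k<l$: $k\le l$, $k\neq l$). A homogeneous $d$-dimensional multi-time Markov renewal chain is a process $(J_n,S_n)_{n\in\mathbb{N}}$, $J_n\in E$, $S_n\in\mathbb{N}^d$, $S_0=0_d$, $S_n<S_{n+1}$, with a.s. $\mathbb{P}(J_{n+1}=j,S_{n+1}-S_n=k\mid J_{0:n},S_{0:n})=q_{J_nj}(k)$, $q_{ij}(k)=\mathbb{P}(J_{n+1}=j,S_{n+1}-S_n=k\mid J_n=i)$ independent of $n$. $X_{n+1}=S_{n+1}-S_n$. $N(k)=\sup\{n\in\mathbb{N}:S_n\le k\}$; the associated multi-time semi-Markov chain is $Z_k=J_{N(k)}$, $k\in\mathbb{N}^d$, and its transition function is $P_{ij}(k)=\mathbb{P}(Z_k=j\mid Z_{0_d}=i)$. With $H_i(k)=\mathbb{P}(X_{n+1}\le k\mid J_n=i)$,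 $\widetilde{H}\in\mathcal{M}_s(\mathbb{N}^d)$ is the diagonal matrix sequence $\widetilde{H}(k)=\mathrm{diag}(1-H_1(k),\dots,1-H_s(k))$. *)

From HB Require Import structures.
From mathcomp Require Import all_boot all_order all_algebra.
From mathcomp Require Import all_classical all_reals all_analysis.
Set Implicit Arguments. Unset Strict Implicit. Unset Printing Implicit Defensive.
Import Order.TTheory GRing.Theory Num.Theory.
Local Open Scope ring_scope.
Local Open Scope classical_set_scope.

Definition mi (d : nat) := {ffun 'I_d -> nat}.

Definition mi0 (d : nat) : mi d := [ffun => 0%N].
Definition mi_sub d (k l : mi d) : mi d := [ffun i => (k i - l i)%N].
Definition mle d (k l : mi d) : bool := [forall i, (k i <= l i)%N].
Definition mlt d (k l : mi d) : bool := mle k l && (k != l).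
Definition mnorm d (k : mi d) : nat := (\sum_(i < d) k i)%N.

(* the finite list of all l in N^d with l <= k *)
Definition box d (k : mi d) : seq (mi d) :=
  [seq l <- map (fun g : {ffun 'I_d -> 'I_(\max_(i < d) k i).+1} =>
                   ([ffun i => nat_of_ord (g i)] : mi d))
               (enum {ffun 'I_d -> 'I_(\max_(i < d) k i).+1}) | mle l k].

Definition mseq (R : realType) (s d : nat) := mi d -> 'M[R]_s.

Definition mconv (R : realType) s d (A B : mseq R s d) : mseq R s d :=
  fun k => \sum_(l <- box k) (A l *m B (mi_sub k l)).

Definition mid (R : realType) s d : mseq R s d :=
  fun k => if k == mi0 d then 1%:M else 0.

Fixpoint mpow (R : realType) s d (A : mseq R s d) (n : nat) : mseq R s d :=
  match n with
  | 0 => @mid R s d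
  | n'.+1 => mconv (mpow A n') A
  end.

(* u = sum_{n>=0} q^(n); for a semi-Markov kernel (q(0_d) = 0) one has
   q^(n)(k) = 0 whenever n > |k|, so the series at k is the finite sum below. *)
Definition markov_renewal_fn (R : realType) s d (q : mseq R s d) : mseq R s d :=
  fun k => \sum_(n < (mnorm k).+1) mpow q n k.

(* H_i(k) = P(X_{n+1} <= k | J_n = i) = sum_j sum_{l <= k} q_ij(l) *)
Definition Hsoj (R : realType) s d (q : mseq R s d) (i : 'I_s) (k : mi d) : R :=
  \sum_(j < s) \sum_(l <- box k) q l i j.

Definition Htilde (R : realType) s d (q : mseq R s d) : mseq R s d :=
  fun k => \matrix_(i, j) (if i == j then 1 - Hsoj q i k else 0).

Definition hist (T : Type) s d (J : nat -> T -> 'I_s) (S : nat -> T -> mi d)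
  (n : nat) (js : nat -> 'I_s) (ss : nat -> mi d) : set T :=
  [set w | forall m, (m <= n)%N -> J m w = js m /\ S m w = ss m].

(* Event {Z_k = j}, where Z_k = J_{N(k)}, N(k) = sup {n | S_n <= k} *)
Definition Zev (T : Type) s d (J : nat -> T -> 'I_s) (S : nat -> T -> mi d)
  (k : mi d) (j : 'I_s) : set T :=
  [set w | exists n, mle (S n w) k /\ (forall m, mle (S m w) k -> (m <= n)%N)
                     /\ J n w = j].

Definition condP (R : realType) (dT : measure_display) (T : measurableType dT)
  (P : probability T R) (A B : set T) : R :=
  fine (P (A `&` B)) / fine (P B).

Definition is_MRC (R : realType) (dT : measure_display) (T : measurableType dT)
  (P : probability T R) s d (J : nat -> T -> 'I_s) (S : nat -> T -> mi d)
  (q : mseq R s d) : Prop :=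
  [/\ (forall n j, measurable [set w | J n w = j]),
      (forall n k, measurable [set w | S n w = k]),
      (forall w, S 0%N w = mi0 d),
      (forall n w, mlt (S n w) (S n.+1 w)) &
      (forall n js ss (j : 'I_s) (k : mi d),
         P (hist J S n js ss `&` [set w | J n.+1 w = j /\ mi_sub (S n.+1 w) (S n w) = k])
         = (P (hist J S n js ss) * (q k (js n) j)%:E)%E)].

Definition semi_markov_kernel (R : realType) s d (q : mseq R s d) : Prop :=
  (forall k i j, 0 <= q k i j) /\ q (mi0 d) = 0.

(* Split the event {Z_k = j, J_0 = i} according to the number n = N(k) of jumps
   up to time k and the time l = S_n of the last of them: the pieces are
   {J_0 = i, J_n = j, S_n = l, S_(n+1) not <= k}, with n <= |k| since S is
   strictly increasing.  Summing out the intermediate states with the Markov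
   property gives P(J_0 = i, J_n = j, S_n = l) = P(J_0 = i) q^(n)(l)_ij, and the
   conditional probability that the next jump happens by time k is H_j(k - l).
   Hence P(Z_k = j, J_0 = i) = P(J_0 = i) sum_(l <= k) sum_(n <= |k|)
   q^(n)(l)_ij (1 - H_j(k - l)), which is P(J_0 = i) (u * H~)(k)_ij because
   q(0) = 0 makes q^(n)(l) vanish for n > |l|. *)

From HB Require Import structures.
From mathcomp Require Import all_boot all_order all_algebra.
From mathcomp Require Import all_classical all_reals all_analysis.
From mathcomp Require Import zify.
Import Order.TTheory GRing.Theory Num.Theory.
Local Open Scope ring_scope.
Local Open Scope classical_set_scope.
Set Implicit Arguments. Unset Strict Implicit.

Lemma allpairs_pair_uniq (A B : eqType) (xs : seq A) (ys : seq B) :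
  uniq xs -> uniq ys -> uniq [seq (x, y) | x <- xs, y <- ys].
Proof. by move=> uxs uys; apply: allpairs_uniq => // [[? ?] [? ?]]. Qed.

Section MultiIndex.
Variable d : nat.
Implicit Types k l m : mi d.

Lemma mleP k l : reflect (forall i, (k i <= l i)%N) (mle k l).
Proof. exact: forallP. Qed.

Lemma mlexx k : mle k k.
Proof. by apply/mleP. Qed.

Lemma mle_trans l k m : mle k l -> mle l m -> mle k m.
Proof. by move=> /mleP kl /mleP lm; apply/mleP => i; apply: leq_trans (kl i) (lm i). Qed.

Lemma mnorm_mle k l : mle k l -> (mnorm k <= mnorm l)%N.
Proof. by move=> /mleP kl; apply: leq_sum => i _. Qed.

Lemma mnorm_mlt k l : mlt k l -> (mnorm k < mnorm l)%N.
Proof.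
case/andP => /mleP kl; apply: contraNT; rewrite -leqNgt => lk.
apply/eqP/ffunP => i; apply/eqP; rewrite eqn_leq kl /=.
move: lk; apply: contraLR; rewrite -!ltnNge => lt_ki.
by rewrite /mnorm (bigD1 i) //= [X in (_ < X)%N](bigD1 i) //= -addSn leq_add ?leq_sum.
Qed.

Lemma mnorm0 : mnorm (mi0 d) = 0%N.
Proof. by rewrite /mnorm big1 // => i _; rewrite ffunE. Qed.

Lemma mi_subnn k : mi_sub k k = mi0 d.
Proof. by apply/ffunP => i; rewrite !ffunE subnn. Qed.

Lemma mi_sub_inj l k m : mle l k -> mle l m -> mi_sub k l = mi_sub m l -> k = m.
Proof.
move=> /mleP lk /mleP lm /ffunP eq_sub; apply/ffunP => i.
by move: (eq_sub i); rewrite !ffunE => /(congr1 (addn^~ (l i))); rewrite !subnK.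
Qed.

Lemma mle_sub2r l k m : mle l m -> mle (mi_sub k l) (mi_sub m l) = mle k m.
Proof.
by move=> /mleP lm; apply: eq_forallb => i; rewrite !ffunE leq_sub2rE.
Qed.

Lemma mem_box k l : (l \in box k) = mle l k.
Proof.
rewrite mem_filter; have [/mleP lk|] //= := boolP (mle l k).
have l_bound i : (l i < (\max_(j < d) k j).+1)%N.
  by rewrite ltnS (leq_trans (lk i)) // (leq_bigmax_cond _ _).
apply/mapP; exists [ffun i => Ordinal (l_bound i)]; first by rewrite mem_enum.
by apply/ffunP => i; rewrite !ffunE.
Qed.

Lemma box_uniq k : uniq (box k).
Proof.
rewrite filter_uniq // map_inj_uniq ?enum_uniq // => f g /ffunP eq_fg.
by apply/ffunP => i; apply: val_inj; move: (eq_fg i); rewrite !ffunE.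
Qed.

End MultiIndex.

Section ConvolutionPowers.
Variables (R : realType) (s d : nat) (q : mseq R s d).
Hypothesis q0 : q (mi0 d) = 0.

Lemma mpow_eq0 n l : (mnorm l < n)%N -> mpow q n l = 0.
Proof.
elim: n l => // n IH l lt_ln /=; rewrite /mconv big1_seq // => l' /[!mem_box] /= l'l.
have [-> | ne] := eqVneq l' l; first by rewrite mi_subnn q0 mulmx0.
rewrite IH ?mul0mx //; have : mlt l' l by rewrite /mlt l'l ne.
by move=> /mnorm_mlt; lia.
Qed.

Lemma markov_renewal_fnE N l : (mnorm l <= N)%N ->
  markov_renewal_fn q l = \sum_(0 <= n < N.+1) mpow q n l.
Proof.
move=> le_lN; rewrite /markov_renewal_fn -(big_mkord xpredT (fun n => mpow q n l)).
rewrite [RHS](big_cat_nat _ (n := (mnorm l).+1)) //= [X in _ + X]big1_seq ?addr0 //.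
by move=> n /andP[_]; rewrite mem_index_iota => /andP[lt_ln _]; apply: mpow_eq0.
Qed.

Lemma mconv_renewal_HtildeE k i j :
  mconv (markov_renewal_fn q) (Htilde q) k i j =
  \sum_(0 <= n < (mnorm k).+1) \sum_(l <- box k)
     mpow q n l i j * (1 - Hsoj q j (mi_sub k l)).
Proof.
rewrite exchange_big /mconv summxE; apply: eq_big_seq => l /[!mem_box] lk /=.
rewrite mxE (bigD1 j) //= big1 => [|j' /negbTE j'j]; last by rewrite mxE j'j mulr0.
by rewrite mxE eqxx addr0 (markov_renewal_fnE (mnorm_mle lk)) summxE mulr_suml.
Qed.

End ConvolutionPowers.

Section DiscreteProbability.
Variables (R : realType) (dT : measure_display) (T : measurableType dT)
  (P : probability T R).

Definition pr (A : set T) : R := fine (P A).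

Lemma prE A : measurable A -> P A = (pr A)%:E.
Proof. by move=> mA; rewrite fineK // fin_num_measure. Qed.

Lemma pr_setD A B : measurable A -> measurable B ->
  pr (A `\` B) = pr A - pr (A `&` B).
Proof.
move=> mA mB; apply/eqP; rewrite eq_sym subr_eq; apply/eqP.
apply: EFin_inj; rewrite EFinD -!prE //.
- exact: measureDI.
- exact: measurableI.
- exact: measurableD.
Qed.

Lemma pr_bigcup (I : choiceType) (xs : seq I) (F : I -> set T) : uniq xs ->
  (forall x, measurable (F x)) -> trivIset [set` xs] F ->
  pr (\bigcup_(x in [set` xs]) F x) = \sum_(x <- xs) pr (F x).
Proof.
move=> uxs mF tF; apply: EFin_inj; rewrite -sumEFin.
rewrite -prE; last by rewrite bigcup_seq; apply: bigsetU_measurable.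
rewrite measure_fin_bigcup // -fsbig_seq //.
by apply: eq_bigr => x _; rewrite -prE.
Qed.

Definition discrete_rv (I : Type) (X : T -> I) : Prop :=
  forall x, measurable [set w | X w = x].

Lemma measurable_discrete_rv (I : countType) (X : T -> I) (B : set I) :
  discrete_rv X -> measurable [set w | B (X w)].
Proof.
move=> mX; have -> : [set w | B (X w)] = \bigcup_(x in B) [set w | X w = x].
  by apply/seteqP; split => [w Bw | w [x Bx /= ->]] //; exists (X w).
rewrite bigcup_mkcond; apply: countable_bigcupT_measurable => [|x].
  exact: countableP.
by case: ifP.
Qed.

Lemma discrete_rv_comp (I : countType) (J : Type) (f : I -> J) (X : T -> I) :
  discrete_rv X -> discrete_rv (f \o X).
Proof. by move=> mX y; exact: (measurable_discrete_rv [set x | f x = y]). Qed.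

Lemma discrete_rv_pair (I J : Type) (X : T -> I) (Y : T -> J) :
  discrete_rv X -> discrete_rv Y -> discrete_rv (fun w => (X w, Y w)).
Proof.
move=> mX mY [x y]; have -> : [set w | (X w, Y w) = (x, y)] =
    [set w | X w = x] `&` [set w | Y w = y].
  by apply/seteqP; split => w /= [-> ->].
exact: measurableI.
Qed.

Section TotalProbability.
Variables (I : choiceType) (X : T -> I) (xs : seq I).
Hypotheses (mX : discrete_rv X) (uxs : uniq xs).

Lemma pr_total A : measurable A -> A `<=` [set w | X w \in xs] ->
  pr A = \sum_(x <- xs) pr (A `&` [set w | X w = x]).
Proof.
move=> mA AX; rewrite -pr_bigcup //; last first.
- by move=> x y _ _ [w [[_ <-] [_ <-]]].
- by move=> x; apply: measurableI.
congr pr; apply/seteqP; split => [w Aw | w [x _ []] //].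
by exists (X w) => //=; apply: AX.
Qed.

Lemma pr_mixture A B c : measurable A -> measurable B ->
  A `<=` [set w | X w \in xs] ->
  (forall x, x \in xs -> pr (A `&` [set w | X w = x] `&` B) =
                         pr (A `&` [set w | X w = x]) * c) ->
  pr (A `&` B) = pr A * c.
Proof.
move=> mA mB AX factor; rewrite (pr_total mA AX) big_distrl /=.
rewrite (pr_total (measurableI _ _ mA mB)); last by move=> w [/AX].
by apply: eq_big_seq => x /factor <-; rewrite setIAC.
Qed.

End TotalProbability.
End DiscreteProbability.

Section MarkovRenewalChain.
Variables (R : realType) (dT : measure_display) (T : measurableType dT)
  (P : probability T R) (s d : nat) (J : nat -> T -> 'I_s) (S : nat -> T -> mi d)
  (q : mseq R s d).
Hypothesis mrc : is_MRC P J S q.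

Local Notation pr := (pr P).

Definition state n w := (J n w, S n w).
Definition step n w := (J n.+1 w, mi_sub (S n.+1 w) (S n w)).

Lemma discrete_J n : discrete_rv (J n).
Proof. by move=> x; case: mrc. Qed.

Lemma discrete_S n : discrete_rv (S n).
Proof. by move=> x; case: mrc. Qed.

Lemma discrete_state n : discrete_rv (state n).
Proof. exact: discrete_rv_pair (discrete_J n) (discrete_S n). Qed.

Lemma discrete_step n : discrete_rv (step n).
Proof.
apply: discrete_rv_pair (discrete_J _) _.
exact: (discrete_rv_comp (fun p => mi_sub p.1 p.2)
  (discrete_rv_pair (discrete_S n.+1) (discrete_S n))).
Qed.

Lemma measurable_S_mle n k : measurable [set w | mle (S n w) k].
Proof. exact: (measurable_discrete_rv [set l | mle l k] (discrete_S n)). Qed.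

Lemma S_mle w : {homo S^~ w : m n / (m <= n)%N >-> mle m n}.
Proof.
apply: homo_leq => [|l k m|n]; [exact: mlexx | exact: mle_trans |].
by case: mrc => _ _ _ /(_ n w) /andP[].
Qed.

Lemma leq_mnorm_S n w : (n <= mnorm (S n w))%N.
Proof.
elim: n => // n IH; apply: leq_ltn_trans IH (mnorm_mlt _).
by case: mrc => _ _ _ /(_ n w).
Qed.

Lemma Zev0 i : Zev J S (mi0 d) i = [set w | J 0 w = i].
Proof.
have S_mle0 n w : mle (S n w) (mi0 d) -> n = 0%N.
  by move=> /mnorm_mle; rewrite mnorm0; have := leq_mnorm_S n w; lia.
apply/seteqP; split => w /=; first by case=> n [/S_mle0 -> [_ ->]].
move=> J0; exists 0%N; split; first by case: mrc => _ _ -> _ _; rewrite mlexx.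
by split => // m /S_mle0 ->.
Qed.

Definition trail i a n (js : nat -> 'I_s) (ss : nat -> mi d) : set T :=
  [set w | J 0 w = i /\ forall m, (a <= m <= n)%N -> state m w = (js m, ss m)].

Lemma measurable_trail i a n js ss : measurable (trail i a n js ss).
Proof.
have -> : trail i a n js ss = [set w | J 0 w = i] `&`
    \bigcap_(m in [set m | (a <= m <= n)%N]) [set w | state m w = (js m, ss m)].
  by [].
apply: measurableI; first exact: discrete_J.
by apply: bigcap_measurableType => m _; apply: discrete_state.
Qed.

Lemma trail_hist n js ss : trail (js 0%N) 0 n js ss = hist J S n js ss.
Proof.
apply/seteqP; split => w /=; first by move=> [_ tr] m /tr [].
by move=> h; split => [|m /h [<- <-]] //; case: (h 0%N).
Qed.

Lemma hist_step_markov n js ss j k :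
  pr (hist J S n js ss `&` [set w | step n w = (j, k)]) =
  pr (hist J S n js ss) * q k (js n) j.
Proof.
have mhist : measurable (hist J S n js ss) by rewrite -trail_hist; apply: measurable_trail.
have mstep := discrete_step n (j, k).
have step_eq : [set w | step n w = (j, k)] =
    [set w | J n.+1 w = j /\ mi_sub (S n.+1 w) (S n w) = k].
  by apply/seteqP; split => w [<- <-].
rewrite step_eq in mstep *; apply: EFin_inj; rewrite EFinM -!prE //.
- by case: mrc.
- exact: measurableI.
Qed.

(* Induction on a: each step sums out the unobserved state at time a, the case
   a = 0 being the defining property of the chain. *)
Lemma trail_step_markov a n i js ss j k : (a <= n)%N ->
  pr (trail i a n js ss `&` [set w | step n w = (j, k)]) =
  pr (trail i a n js ss) * q k (js n) j.
Proof.
elim: a i js ss => [|a IH] i js ss le_an.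
  have [<- | ne] := eqVneq (js 0%N) i; first by rewrite trail_hist hist_step_markov.
  have -> : trail i 0 n js ss = set0.
    apply/seteqP; split => // w [J0 /(_ 0%N (leq0n n)) [J0' _]].
    by move: ne; rewrite -J0 -J0' eqxx.
  by rewrite set0I /pr measure0 mul0r.
have uxs := allpairs_pair_uniq (index_enum_uniq 'I_s) (box_uniq (ss a.+1)).
apply: (pr_mixture (discrete_state a) uxs).
- exact: measurable_trail.
- exact: discrete_step.
- move=> w [_ tr]; apply: allpairs_f; first exact: mem_index_enum.
  have [_ <-] : state a.+1 w = (js a.+1, ss a.+1) by apply: tr; rewrite leqnn le_an.
  by rewrite mem_box; apply: S_mle.
move=> [j' l] _.
have -> : trail i a.+1 n js ss `&` [set w | state a w = (j', l)] =
    trail i a n [eta js with a |-> j'] [eta ss with a |-> l].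
  apply/seteqP; split => w /=.
    move=> [[J0 tr] st_a]; split => // m /andP[le_am le_mn].
    rewrite /=; have [-> //|ne] := eqVneq m a; apply: tr.
    by rewrite le_mn andbT ltn_neqAle eq_sym ne le_am.
  move=> [J0 tr]; split; first split => // m /andP[lt_am le_mn].
    by have := tr m; rewrite /= (gtn_eqF lt_am) le_mn (ltnW lt_am); apply.
  by have := tr a; rewrite /= eqxx leqnn (ltnW le_an); apply.
by rewrite IH ?(ltnW le_an) //= (gtn_eqF le_an).
Qed.

Definition reach i n j l : set T := [set w | J 0 w = i /\ state n w = (j, l)].

Lemma measurable_reach i n j l : measurable (reach i n j l).
Proof. by apply: measurableI; [apply: discrete_J | apply: discrete_state]. Qed.

Lemma reach_step_markov i n j l j' k :
  pr (reach i n j l `&` [set w | step n w = (j', k)]) = pr (reach i n j l) * q k j j'.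
Proof.
have -> : reach i n j l = trail i n n (fun=> j) (fun=> l).
  apply/seteqP; split => w /= [J0 st]; split => //.
    by move=> m; rewrite -eqn_leq => /eqP <-.
  by apply: st; rewrite leqnn.
exact: trail_step_markov.
Qed.

Lemma pr_reach i n j l :
  pr (reach i n j l) = pr [set w | J 0 w = i] * mpow q n l i j.
Proof.
elim: n j l => [|n IH] j' l'.
  rewrite /= /mid; have [-> | ne] := eqVneq l' (mi0 d); last first.
    have -> : reach i 0 j' l' = set0.
      apply/seteqP; split => // w [_ [_ S0]]; move: ne; rewrite -S0.
      by case: mrc => _ _ ->; rewrite eqxx.
    by rewrite /pr measure0 mxE mulr0.
  rewrite mxE; have [<- | ne] := eqVneq i j'.
    rewrite mulr1; congr pr; apply/seteqP; split => [w [] //| w J0].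
    by split => //; rewrite /state J0; case: mrc => _ _ ->.
  have -> : reach i 0 j' (mi0 d) = set0.
    by apply/seteqP; split => // w [J0 [J0' _]]; move: ne; rewrite -J0 -J0' eqxx.
  by rewrite /pr measure0 mulr0.
have uxs := allpairs_pair_uniq (index_enum_uniq 'I_s) (box_uniq l').
rewrite (pr_total P (discrete_state n) uxs (measurable_reach _ _ _ _)); last first.
  move=> w [_ [_ S_l']]; apply: allpairs_f; first exact: mem_index_enum.
  by rewrite mem_box -S_l'; apply: S_mle.
rewrite big_allpairs /= /mconv summxE exchange_big mulr_sumr.
apply: eq_big_seq => l /[!mem_box] ll'; rewrite mxE mulr_sumr; apply: eq_bigr => j _.
have -> : reach i n.+1 j' l' `&` [set w | state n w = (j, l)] =
    reach i n j l `&` [set w | step n w = (j', mi_sub l' l)].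
  apply/seteqP; split => w /= [[J0 st] st'].
    split; first by split.
    by rewrite /step; move: st st' => -[-> ->] [_ ->].
  split => //; split => //; rewrite /state.
  move: st st' => -[_ Sn] [-> Sn1]; congr pair.
  apply: (mi_sub_inj _ ll'); last by rewrite -Sn1 Sn.
  by rewrite -Sn; apply: S_mle.
by rewrite reach_step_markov IH mulrA.
Qed.

Lemma pr_reach_next_mle i n j l k : mle l k ->
  pr (reach i n j l `&` [set w | mle (S n.+1 w) k]) =
  pr (reach i n j l) * Hsoj q j (mi_sub k l).
Proof.
move=> lk.
have uxs := allpairs_pair_uniq (index_enum_uniq 'I_s) (box_uniq (mi_sub k l)).
rewrite (pr_total P (discrete_step n) uxs); last 2 first.
- exact: measurableI (measurable_reach _ _ _ _) (measurable_S_mle _ _).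
- move=> w [[_ [_ Sn]] Sk]; apply: allpairs_f; first exact: mem_index_enum.
  by rewrite mem_box Sn mle_sub2r.
rewrite big_allpairs /Hsoj mulr_sumr; apply: eq_bigr => j' _; rewrite mulr_sumr.
apply: eq_big_seq => m /[!mem_box] mk; rewrite -reach_step_markov; congr pr.
apply/seteqP; split => w /= [reach_w st]; first by case: reach_w.
split => //; split => //; move: reach_w st => [_ [_ Sn]] [_ Sn1].
by rewrite -(mle_sub2r _ lk) -Sn Sn1 Sn.
Qed.

(* The event {N(k) = n}, since S is increasing. *)
Definition N_eq k n : set T :=
  [set w | mle (S n w) k] `\` [set w | mle (S n.+1 w) k].

Lemma measurable_N_eq k n : measurable (N_eq k n).
Proof. by apply: measurableD; apply: measurable_S_mle. Qed.

Lemma trivIset_N_eq k (D : set nat) : trivIset D (N_eq k).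
Proof.
move=> n n' _ _ [w [[Snk Sn1k] [Sn'k Sn'1k]]].
by case: (ltngtP n n') => // lt; [case: Sn1k | case: Sn'1k]; apply: mle_trans (S_mle w lt) _.
Qed.

Lemma Zev_bigcup k j : Zev J S k j =
  \bigcup_(n in [set` index_iota 0 (mnorm k).+1]) ([set w | J n w = j] `&` N_eq k n).
Proof.
apply/seteqP; split => w /=.
  move=> [n [Snk [maxn Jn]]]; exists n.
    suff: n \in index_iota 0 (mnorm k).+1 by [].
    by rewrite mem_index_iota ltnS (leq_trans (leq_mnorm_S n w) (mnorm_mle Snk)).
  by split => //; split => // /maxn; rewrite ltnn.
move=> [n _ [Jn [Snk Sn1k]]]; exists n; split => //; split => // m Smk.
rewrite leqNgt; apply/negP => lt_nm; apply: Sn1k.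
exact: mle_trans (S_mle w lt_nm) Smk.
Qed.

Lemma pr_reach_leave i n j l k : mle l k ->
  pr (reach i n j l `\` [set w | mle (S n.+1 w) k]) =
  pr [set w | J 0 w = i] * (mpow q n l i j * (1 - Hsoj q j (mi_sub k l))).
Proof.
move=> lk; rewrite pr_setD; [|exact: measurable_reach | exact: measurable_S_mle].
by rewrite pr_reach_next_mle // pr_reach mulrA mulrBr mulr1.
Qed.

Lemma pr_Zev_J0 i j k : q (mi0 d) = 0 ->
  pr (Zev J S k j `&` [set w | J 0 w = i]) =
  pr [set w | J 0 w = i] * mconv (markov_renewal_fn q) (Htilde q) k i j.
Proof.
move=> q0.
have mF n : measurable ([set w | J n w = j] `&` N_eq k n `&` [set w | J 0 w = i]).
  apply: measurableI _ _ _ (discrete_J 0 i).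
  exact: measurableI _ _ (discrete_J n j) (measurable_N_eq k n).
rewrite mconv_renewal_HtildeE // mulr_sumr Zev_bigcup setI_bigcupl.
rewrite pr_bigcup ?iota_uniq //; last exact/trivIset_setIr/trivIset_setIl/trivIset_N_eq.
apply: eq_bigr => n _; rewrite mulr_sumr (pr_total P (discrete_S n) (box_uniq k)) //.
  apply: eq_big_seq => l /[!mem_box] lk; rewrite -pr_reach_leave //; congr pr.
  apply/seteqP; split => w /=.
    by move=> [[[Jn [_ Sn1k]] J0] Sn]; do !split => //; rewrite /state Jn Sn.
  by move=> [[J0 [Jn Sn]] Sn1k]; do !split => //; rewrite /= Sn.
by move=> w [[_ [Snk _]] _]; rewrite /= mem_box.
Qed.

End MarkovRenewalChain.

Theorem proposition8 (R : realType) (dT : measure_display) (T : measurableType dT)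
  (P : probability T R) (s d : nat) (J : nat -> T -> 'I_s) (S : nat -> T -> mi d)
  (q : mseq R s d) :
  semi_markov_kernel q ->
  is_MRC P J S q ->
  forall (i j : 'I_s) (k : mi d),
    P (Zev J S (mi0 d) i) != 0%E ->
    condP P (Zev J S k j) (Zev J S (mi0 d) i)
    = mconv (markov_renewal_fn q) (Htilde q) k i j.
Proof.
move=> [_ q0] mrc i j k; rewrite (Zev0 mrc) (prE P (discrete_J mrc 0 i)) eqe => pr_i.
rewrite /condP -!/(pr P _) (pr_Zev_J0 mrc) //.
by rewrite mulrC mulrA mulVf ?mul1r.
Qed.
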